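(* Define, for $m,n\ge1$, $\widetilde G_{m,n}(a)=G_{m,n}(a)+\sum_{j=0}^{m-2}G_{n-1,j+2}(a)\,G_{m-j-1,2}(a)$. Then \[ \sum_{m\ge1}\sum_{n\ge1}\widetilde G_{m,n+1}(a)x^my^n=\frac{-yL(a,-x)+xL(a,-y)}{-L(a,-x)+L(a,-y)}\left(\frac{-yL(a,-x)-xL(a,-y)}{xy}-1\right), \] and consequently $\widetilde G_{m,n}(a)=\widetilde G_{n-1,m+1}(a)$ for all $m\ge1$, $n\ge2$.
   Context: Let $L(a,t)=\sum_{n\ge1}\lambda_n(a)t^n\in\mathbb Q[a][[t]]$ be the compositional inverse (in $t$) of $e^{-at}(e^t-1)$, equivalently the unique such series with $e^{L(a,t)}(1-te^{(a-1)L(a,t)})=1$. The generalized Gregory polynomials $G_{m,n}(a)$ are defined by $\sum_{m,n\ge0}G_{m,n}(a)x^my^n=\dfrac{yL(a,-x)^2-xL(a,-y)^2}{-L(a,-x)+L(a,-y)}$. *)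

(* Formal power series with coefficients in Q[a] = {poly rat}
   are represented by their coefficient functions:
     univariate  series  u : nat -> {poly rat}         (u n = coeff of t^n)
     bivariate   series  A : nat -> nat -> {poly rat}  (A m n = coeff of x^m y^n) *)
From HB Require Import structures.
From mathcomp Require Import all_boot all_order all_algebra.
Set Implicit Arguments. Unset Strict Implicit. Unset Printing Implicit Defensive.
Import Order.TTheory GRing.Theory Num.Theory.
Local Open Scope ring_scope.

Notation Qa := {poly rat}.
Notation ser := (nat -> Qa).
Notation bser := (nat -> nat -> Qa).

(* coefficients of f(a,t) = e^{-at}(e^t - 1) = e^{(1-a)t} - e^{-at}:
   f_k = ((1-a)^k - (-a)^k) / k!  *)
Definition fcoef (k : nat) : Qa :=
  ((k`!%:R : rat)^-1)%:P * ((1 - 'X) ^+ k - (- 'X) ^+ k).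

Definition smul (u v : ser) : ser :=
  fun n => \sum_(i < n.+1) u i * v (n - i)%N.
Definition sone : ser := fun n => (n == 0%N)%:R.
Definition spow (u : ser) (k : nat) : ser := iter k (smul u) sone.

(* lam is the coefficient sequence of L(a,t), the compositional inverse of
   f(a,t) in t:  L has no constant term and f(a, L(a,t)) = t. *)
Definition is_L (lam : ser) : Prop :=
  lam 0%N = 0 /\
  forall n : nat, \sum_(k < n.+1) fcoef k * spow lam k n = (n == 1%N)%:R.

Definition badd (A B : bser) : bser := fun m n => A m n + B m n.
Definition bopp (A : bser) : bser := fun m n => - A m n.
Definition bsub (A B : bser) : bser := fun m n => A m n - B m n.
Definition bmul (A B : bser) : bser :=
  fun m n => \sum_(i < m.+1) \sum_(j < n.+1) A i j * B (m - i)%N (n - j)%N.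
Definition bX : bser := fun m n => ((m == 1%N) && (n == 0%N))%:R.
Definition bY : bser := fun m n => ((m == 0%N) && (n == 1%N))%:R.

(* L(a,-x) and L(a,-y) as bivariate series *)
Definition Lmx (lam : ser) : bser :=
  fun m n => if n == 0%N then (-1) ^+ m * lam m else 0.
Definition Lmy (lam : ser) : bser :=
  fun m n => if m == 0%N then (-1) ^+ n * lam n else 0.

(* G is the generating series of the generalized Gregory polynomials:
   (-L(a,-x) + L(a,-y)) * G(x,y) = y L(a,-x)^2 - x L(a,-y)^2
   (this determines G uniquely since Q[a][[x,y]] is an integral domain and
   -L(a,-x)+L(a,-y) = x - y + ... is nonzero). *)
Definition is_G (lam : ser) (G : bser) : Prop :=
  forall m n : nat,
    bmul (bsub (Lmy lam) (Lmx lam)) G m n =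
    bsub (bmul bY (bmul (Lmx lam) (Lmx lam)))
         (bmul bX (bmul (Lmy lam) (Lmy lam))) m n.

Definition Gtil (G : bser) (m n : nat) : Qa :=
  G m n + \sum_(j < m.-1) G n.-1 (j + 2)%N * G (m - j - 1)%N 2%N.

Definition Sgen (G : bser) : bser :=
  fun m n => if (0 < m)%N && (0 < n)%N then Gtil G m n.+1 else 0.

From HB Require Import structures.
From mathcomp Require Import all_boot all_order all_algebra.
From mathcomp Require Import boolp.
From mathcomp Require Import zify ring.
Set Implicit Arguments. Unset Strict Implicit. Unset Printing Implicit Defensive.
Import GRing.Theory.
Local Open Scope ring_scope.

(* Put W = L(a,-y) - L(a,-x), so that W G = y L(a,-x)^2 - x L(a,-y)^2.  Reading this at y^0,
   y^1, y^2 and cancelling L(a,-x) = -x + ... gives G(x,0) = 0, [y^1]G = -L(a,-x) and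
   L(a,-x) [y^2]G = L(a,-x) + x.  Exchanging x and y negates both sides of the equation, so the
   transpose G^T solves it too.  Now x y S splits as x (G - y [y^1]G) plus y times the product
   of [y^2]G with G^T stripped of its x^0 and x^1 coefficients; multiplying by W and substituting
   the equations for G and G^T gives the generating identity.  Its right-hand side changes sign
   under x <-> y, like W, so W x y (S^T - S) = 0, and S is symmetric because W, x and y are not
   zero divisors. *)

Definition fps (R : Type) := nat -> R.
HB.instance Definition _ (R : Type) := gen_eqMixin (fps R).
HB.instance Definition _ (R : Type) := gen_choiceMixin (fps R).

Section FormalPowerSeries.
Variable R : comNzRingType.
Implicit Types (a b c : fps R) (r s : R).

Definition fadd a b : fps R := fun n => a n + b n.
Definition fopp a : fps R := fun n => - a n.
Definition fmul a b : fps R := fun n => \sum_(i < n.+1) a i * b (n - i)%N.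

Lemma faddA : associative fadd.
Proof. by move=> a b c; apply: funext => n; rewrite /fadd addrA. Qed.
Lemma faddC : commutative fadd.
Proof. by move=> a b; apply: funext => n; rewrite /fadd addrC. Qed.
Lemma fadd0 : left_id (fun _ => 0) fadd.
Proof. by move=> a; apply: funext => n; rewrite /fadd add0r. Qed.
Lemma faddN : left_inverse (fun _ => 0) fopp fadd.
Proof. by move=> a; apply: funext => n; rewrite /fadd /fopp addNr. Qed.

HB.instance Definition _ := GRing.isZmodule.Build (fps R) faddA faddC fadd0 faddN.

Definition ftrunc (N : nat) a : {poly R} := \poly_(i < N.+1) a i.

Lemma coef_ftrunc N k a : (k <= N)%N -> (ftrunc N a)`_k = a k.
Proof. by move=> kN; rewrite coef_poly ltnS kN. Qed.

(* Associativity and commutativity are inherited from polynomials through truncation. *)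
Lemma fmul_trunc N k a b : (k <= N)%N -> fmul a b k = (ftrunc N a * ftrunc N b)`_k.
Proof.
move=> kN; rewrite coefM; apply: eq_bigr => i _.
rewrite !coef_ftrunc // ?(leq_trans (leq_subr _ _) kN) //.
exact: leq_trans (ltnSE (ltn_ord i)) kN.
Qed.

Lemma fmulA : associative fmul.
Proof.
move=> a b c; apply: funext => n.
transitivity ((ftrunc n a * ftrunc n b * ftrunc n c)`_n).
  rewrite -mulrA coefM; apply: eq_bigr => i _; have le_in := ltnSE (ltn_ord i).
  by rewrite coef_ftrunc // (@fmul_trunc n) ?coef_ftrunc ?leq_subr.
rewrite coefM; apply: eq_bigr => i _; have le_in := ltnSE (ltn_ord i).
by rewrite (@fmul_trunc n) // coef_ftrunc ?leq_subr.
Qed.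

Lemma fmulC : commutative fmul.
Proof.
by move=> a b; apply: funext => n; rewrite (@fmul_trunc n) // mulrC -fmul_trunc.
Qed.

Lemma fmul1 : left_id (fun n => (n == 0)%:R) fmul.
Proof.
move=> a; apply: funext => n; rewrite /fmul big_ord_recl mul1r subn0.
by rewrite big1 ?addr0 // => i _; rewrite mul0r.
Qed.

Lemma fmulDl : left_distributive fmul fadd.
Proof.
move=> a b c; apply: funext => n; rewrite /fmul /fadd -big_split /=.
by apply: eq_bigr => i _; rewrite mulrDl.
Qed.

Lemma fone_neq0 : (fun n => (n == 0)%:R) != 0 :> fps R.
Proof. by apply/eqP => /(congr1 (fun a : fps R => a 0%N))/eqP; rewrite oner_eq0. Qed.

HB.instance Definition _ := GRing.Zmodule_isComNzRing.Build (fps R)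
  fmulA fmulC fmul1 fmulDl fone_neq0.

Lemma coef_fmul a b n : (a * b) n = \sum_(i < n.+1) a i * b (n - i)%N.
Proof. by []. Qed.

Lemma coef_fadd a b n : (a + b) n = a n + b n.
Proof. by []. Qed.

Lemma coef_fsub a b n : (a - b) n = a n - b n.
Proof. by []. Qed.

Lemma coef_fsum (I : Type) (r : seq I) (P : pred I) (F : I -> fps R) n :
  (\sum_(i <- r | P i) F i) n = \sum_(i <- r | P i) F i n.
Proof. exact: (big_morph (fun a : fps R => a n)). Qed.

Lemma coef_fmul0 a b : (a * b) 0%N = a 0%N * b 0%N.
Proof. by rewrite coef_fmul big_ord1. Qed.
Lemma coef_fmul1 a b : (a * b) 1%N = a 0%N * b 1%N + a 1%N * b 0%N.
Proof. by rewrite coef_fmul !big_ord_recl big_ord0 addr0. Qed.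
Lemma coef_fmul2 a b :
  (a * b) 2%N = a 0%N * b 2%N + a 1%N * b 1%N + a 2%N * b 0%N.
Proof. by rewrite coef_fmul !big_ord_recl big_ord0 addr0 addrA. Qed.

Definition fC r : fps R := fun n => if n == 0%N then r else 0.
Definition fX : fps R := fun n => (n == 1%N)%:R.

Lemma coef_fCmul r a n : (fC r * a) n = r * a n.
Proof.
rewrite coef_fmul big_ord_recl subn0 big1 ?addr0 // => i _.
by rewrite /fC mul0r.
Qed.

Lemma coef_fXmul a n : (fX * a) n = if n is k.+1 then a k else 0.
Proof.
case: n => [|n]; first by rewrite coef_fmul0 mul0r.
rewrite coef_fmul !big_ord_recl /= big1 ?addr0.
  by rewrite /fX /= mul0r mul1r add0r subn1.
by move=> i _; rewrite /fX mul0r.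
Qed.

Lemma fC_is_zmod_morphism : zmod_morphism fC.
Proof.
by move=> r s; apply: funext => n; rewrite coef_fsub /fC; case: ifP; rewrite ?subr0.
Qed.

Lemma fC_is_monoid_morphism : monoid_morphism fC.
Proof.
rewrite /monoid_morphism; split; first by apply: funext => -[].
by move=> r s; apply: funext => n; rewrite coef_fCmul /fC; case: ifP; rewrite ?mulr0.
Qed.

HB.instance Definition _ := GRing.isZmodMorphism.Build R (fps R) fC fC_is_zmod_morphism.
HB.instance Definition _ := GRing.isMonoidMorphism.Build R (fps R) fC fC_is_monoid_morphism.

Lemma fC_lreg r : GRing.lreg r -> GRing.lreg (fC r).
Proof.
move=> reg_r a b ab; apply: funext => n; apply: reg_r.
by rewrite -!coef_fCmul ab.
Qed.

Lemma fX_lreg : GRing.lreg fX.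
Proof.
move=> a b ab; apply: funext => n.
by have := congr1 (fun c => c n.+1) ab; rewrite !coef_fXmul.
Qed.

Lemma fps_lreg a : GRing.lreg (a 0%N) -> GRing.lreg a.
Proof.
move=> reg_a0 b c abc; apply/eqP; rewrite -subr_eq0; apply/eqP.
have : a * (b - c) = 0 by rewrite mulrBr abc subrr.
move: (b - c) => d ad; apply: funext => n; elim/ltn_ind: n => n IH.
apply: reg_a0; rewrite mulr0; have := congr1 (fun e : fps R => e n) ad.
rewrite /= coef_fmul big_ord_recl subn0 big1 ?addr0 // => i _.
by rewrite IH ?mulr0 // lift0; have := ltn_ord i; lia.
Qed.

Lemma fX_shift a : a 0%N = 0 -> a = fX * (fun n => a n.+1).
Proof. by move=> a0; apply: funext => -[|n]; rewrite coef_fXmul. Qed.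

Lemma fps_lreg_order1 a : a 0%N = 0 -> GRing.lreg (a 1%N) -> GRing.lreg a.
Proof.
by move=> a0 reg_a1; rewrite (fX_shift a0); apply: lregM; [exact: fX_lreg | exact: fps_lreg].
Qed.

End FormalPowerSeries.
Arguments fX {R}.

Section FpsMap.
Variables (R S : comNzRingType) (f : {rmorphism R -> S}).

Definition fmap (a : fps R) : fps S := fun n => f (a n).

Lemma fmap_is_zmod_morphism : zmod_morphism fmap.
Proof. by move=> a b; apply: funext => n; rewrite /fmap !coef_fsub rmorphB. Qed.

Lemma fmap_is_monoid_morphism : monoid_morphism fmap.
Proof.
rewrite /monoid_morphism; split; first by apply: funext => n; rewrite /fmap rmorph_nat.
move=> a b; apply: funext => n; rewrite /fmap !coef_fmul rmorph_sum.
by apply: eq_bigr => i _; rewrite rmorphM.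
Qed.

HB.instance Definition _ :=
  GRing.isZmodMorphism.Build (fps R) (fps S) fmap fmap_is_zmod_morphism.
HB.instance Definition _ :=
  GRing.isMonoidMorphism.Build (fps R) (fps S) fmap fmap_is_monoid_morphism.

End FpsMap.

Notation R1 := (fps Qa).
Notation R2 := (fps R1).

Lemma bmulE (A B : bser) : bmul A B = (A : R2) * (B : R2).
Proof.
apply: funext => m; apply: funext => n.
by rewrite coef_fmul coef_fsum; apply: eq_bigr => i _; rewrite coef_fmul.
Qed.
Lemma bsubE (A B : bser) : bsub A B = (A : R2) - (B : R2).
Proof. by []. Qed.
Lemma boppE (A : bser) : bopp A = - (A : R2).
Proof. by []. Qed.

Definition in_x : R1 -> R2 := fmap (@fC Qa).
Definition in_y : R1 -> R2 := @fC R1.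
HB.instance Definition _ := GRing.RMorphism.on in_x.
HB.instance Definition _ := GRing.RMorphism.on in_y.

Definition swap (A : R2) : R2 := fun m n => A n m.

Lemma swap_is_zmod_morphism : zmod_morphism swap.
Proof. by []. Qed.

Lemma swap_is_monoid_morphism : monoid_morphism swap.
Proof.
rewrite /monoid_morphism; split.
  by apply: funext => m; apply: funext => n; rewrite /swap /=; case: m; case: n.
move=> A B; apply: funext => m; apply: funext => n.
rewrite /swap coef_fmul coef_fsum; under eq_bigr do rewrite coef_fmul.
rewrite coef_fmul coef_fsum; under [RHS]eq_bigr do rewrite coef_fmul.
exact: exchange_big.
Qed.

HB.instance Definition _ := GRing.isZmodMorphism.Build R2 R2 swap swap_is_zmod_morphism.
HB.instance Definition _ := GRing.isMonoidMorphism.Build R2 R2 swap swap_is_monoid_morphism.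

Lemma swap_in_x a : swap (in_x a) = in_y a.
Proof. by apply: funext => -[|m]; apply: funext. Qed.
Lemma swap_in_y a : swap (in_y a) = in_x a.
Proof. by apply: funext => m; apply: funext => -[|n]. Qed.

Lemma bX_in_x : bX = in_x fX.
Proof. by apply: funext => -[|[|m]]; apply: funext => -[|n]. Qed.
Lemma bY_in_y : bY = in_y fX.
Proof. by apply: funext => -[|m]; apply: funext => -[|[|n]]. Qed.

Lemma in_x_fX : in_x fX = fX.
Proof. by apply: funext => -[|[|m]]; apply: funext => -[|n]. Qed.

Lemma coef_in_x_fXmul (A : R2) m : (in_x fX * A) m = if m is k.+1 then A k else 0.
Proof. by rewrite in_x_fX coef_fXmul. Qed.
Lemma coef_in_ymul a (A : R2) m : (in_y a * A) m = a * A m.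
Proof. exact: coef_fCmul. Qed.

Lemma coef_mul_in_x (A : R2) a m n :
  (A * in_x a) m n = \sum_(i < m.+1) A i n * a (m - i)%N.
Proof.
rewrite coef_fmul coef_fsum; apply: eq_bigr => i _.
by rewrite mulrC coef_fCmul mulrC.
Qed.

Definition Lneg (lam : ser) : R1 := fun n => (-1) ^+ n * lam n.

Lemma Lmx_in_x lam : Lmx lam = in_x (Lneg lam).
Proof. by []. Qed.
Lemma Lmy_in_y lam : Lmy lam = in_y (Lneg lam).
Proof. by apply: funext => -[|m]; apply: funext. Qed.

Lemma is_L_coef1 lam : is_L lam -> lam 1%N = 1.
Proof.
move=> [lam0 /(_ 1%N)]; rewrite !big_ord_recl big_ord0 /= /fcoef /spow /= /smul /sone.
rewrite !big_ord_recl big_ord0 /= /bump /= lam0 !mulr0 !addr0 !add0r addn0 mulr1.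
by rewrite !expr1 opprK subrK mulr1 invr1 mul1r.
Qed.

Section Gregory.
Variable lam : ser.
Hypothesis lamL : is_L lam.

Local Notation L := (Lneg lam).
Local Notation Lx := (in_x L).
Local Notation Ly := (in_y L).
Local Notation x := (in_x fX).
Local Notation y := (in_y fX).
Local Notation W := (Ly - Lx).

Lemma Lneg0 : L 0%N = 0.
Proof. by rewrite /Lneg lamL.1 mulr0. Qed.
Lemma Lneg1 : L 1%N = -1.
Proof. by rewrite /Lneg (is_L_coef1 lamL) mulr1 expr1. Qed.
Lemma Lneg_lreg : GRing.lreg L.
Proof. by apply: fps_lreg_order1; rewrite ?Lneg0 ?Lneg1 //; exact/lregN/lreg1. Qed.

Lemma Lx0 : Lx 0%N = 0.
Proof. by rewrite /in_x /fmap Lneg0 rmorph0. Qed.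
Lemma Lx1 : Lx 1%N = -1.
Proof. by rewrite /in_x /fmap Lneg1 rmorphN1. Qed.
Lemma Ly0 : Ly 0%N = L.
Proof. by []. Qed.
Lemma LyS k : Ly k.+1 = 0.
Proof. by []. Qed.

Definition gregory_eq (H : R2) : Prop :=
  W * H = y * (Lx * Lx) - x * (Ly * Ly).

Lemma is_G_gregory_eq G : is_G lam G -> gregory_eq G.
Proof.
move=> hG; apply: funext => m; apply: funext => n.
by have := hG m n; rewrite !bmulE !bsubE Lmx_in_x Lmy_in_y bX_in_x bY_in_y.
Qed.

Lemma gregory_eq_swap H : gregory_eq H -> gregory_eq (swap H).
Proof.
move=> /(congr1 swap); rewrite !(rmorphB, rmorphM) /= /gregory_eq.
rewrite !(swap_in_x, swap_in_y) => eHs.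
by rewrite -[LHS]opprK -mulNr opprB eHs opprB.
Qed.

Lemma W0 : W 0%N = L.
Proof. by rewrite coef_fsub Ly0 Lx0 subr0. Qed.
Lemma W1 : W 1%N = 1.
Proof. by rewrite coef_fsub LyS Lx1 sub0r opprK. Qed.

Section Solution.
Variable H : R2.
Hypothesis eqH : gregory_eq H.

Lemma gregory_coef0 : H 0%N = 0.
Proof.
apply: Lneg_lreg; have := congr1 (fun A : R2 => A 0%N) eqH.
rewrite /= coef_fmul0 W0 coef_fsub coef_in_ymul coef_in_x_fXmul coef_fmul0 Lx0.
by rewrite mul0r !mulr0 subr0.
Qed.

Lemma gregory_coef1 : H 1%N = - L.
Proof.
apply: Lneg_lreg; have := congr1 (fun A : R2 => A 1%N) eqH.
rewrite /= coef_fmul1 W0 W1 gregory_coef0 mulr0 addr0 coef_fsub coef_in_ymul coef_in_x_fXmul.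
by rewrite coef_fmul1 Lx0 coef_fmul0 Ly0 !mul0r mulr0 addr0 mulr0 sub0r mulrN.
Qed.

Lemma gregory_coef2 : L * H 2%N = L + fX.
Proof.
have := congr1 (fun A : R2 => A 2%N) eqH.
rewrite /= coef_fmul2 W0 W1 gregory_coef0 gregory_coef1 mulr0 addr0 mul1r.
rewrite coef_fsub coef_in_ymul coef_in_x_fXmul coef_fmul2 coef_fmul1 Lx0 Lx1 Ly0 LyS.
rewrite !mul0r !mulr0 !add0r addr0 mulrN1 opprK mulr1 subr0 => e.
by rewrite -[L * _](addrNK L) e addrC.
Qed.

End Solution.

Section GeneratingSeries.
Variable G : R2.
Hypothesis hG : is_G lam G.

Local Notation S := (Sgen G : R2).
Local Notation g1 := (swap G 1%N).
Local Notation g2 := (swap G 2%N).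
Local Notation Gtail := (swap G - x * in_y g1).

Let eqG : gregory_eq G := is_G_gregory_eq hG.
Let eqGs : gregory_eq (swap G) := gregory_eq_swap eqG.

Lemma G_row0 n : G 0%N n = 0.
Proof. by rewrite (gregory_coef0 eqG). Qed.
Lemma G_col0 m : G m 0%N = 0.
Proof. exact: (congr1 (fun a : R1 => a m) (gregory_coef0 eqGs)). Qed.

Lemma coef_Gtail i n : Gtail i n = if (i < 2)%N then 0 else G n i.
Proof.
rewrite !coef_fsub coef_in_x_fXmul.
case: i => [|[|i]] /=; rewrite /swap ?G_col0 ?subr0 //.
by rewrite /in_y /fC /= subrr.
Qed.

Lemma Sgen_decomp : x * (y * S) = x * (G - y * in_x g1) + y * (Gtail * in_x g2).
Proof.
apply: funext => m; apply: funext => n.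
rewrite !coef_fadd coef_in_ymul !coef_in_x_fXmul coef_fXmul.
case: m => [|m] /=; last rewrite !coef_in_ymul coef_fsub coef_in_ymul !coef_fsub !coef_fXmul.
all: case: n => [|n] /=; rewrite ?coef_mul_in_x.
- by rewrite addr0.
- by rewrite big_ord1 coef_Gtail mul0r addr0.
- by rewrite G_col0 subr0 addr0.
- under eq_bigr do rewrite coef_Gtail.
  case: n => [|n].
    rewrite /Sgen andbF /in_x /fmap /fC /= /swap subrr add0r big1 // => i _.
    by case: ifP; rewrite ?mul0r // G_row0 mul0r.
  case: m => [|m].
    by rewrite /Sgen /in_x /fmap /fC /= G_row0 !big_ord_recl big_ord0 !mul0r !addr0 subr0.
  rewrite /Sgen /= /in_x /fmap /fC /= subr0 /Gtil; congr (_ + _).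
  rewrite 2!big_ord_recl big_ord_recr /= !mul0r !add0r subnn /swap G_row0 mulr0 addr0.
  apply: eq_bigr => j _; rewrite /bump /= !add1n addn2; congr (_ * G _ _); lia.
Qed.

Lemma Sgen_gregory :
  S * W * (x * y) = (x * Ly - y * Lx) * (- (y * Lx) - x * Ly - x * y).
Proof.
have g1E : g1 = - L := gregory_coef1 eqGs.
have g2E : Lx * in_x g2 = Lx + x.
  by rewrite -rmorphM (gregory_coef2 eqGs) rmorphD.
transitivity (W * (x * (y * S))); first ring.
rewrite Sgen_decomp.
transitivity (x * (W * G) - x * y * W * in_x g1
   + y * in_x g2 * (W * swap G)
   - x * y * in_x g2 * W * in_y g1); first ring.
rewrite eqG eqGs g1E !rmorphN.
transitivity (x * (y * (Lx * Lx) - x * (Ly * Ly)) + x * y * W * Lx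
   + y * (Lx * in_x g2) * (y * Lx - x * Ly)); first ring.
by rewrite g2E; ring.
Qed.

Lemma Sgen_swap : swap S = S.
Proof.
have eqS := Sgen_gregory.
have := congr1 swap eqS; rewrite !(rmorphM, rmorphB, rmorphN) /=.
rewrite !(swap_in_x, swap_in_y) => eqSs.
have regW : GRing.lreg (W * (x * y)).
  apply/lregM/lregM; first by apply: fps_lreg; rewrite W0; exact: Lneg_lreg.
    by rewrite in_x_fX; exact: fX_lreg.
  exact/fC_lreg/fX_lreg.
apply/eqP; rewrite -subr_eq0 -(mulrI_eq0 _ regW).
apply/eqP; transitivity (- (swap S * (Lx - Ly) * (y * x)) - S * W * (x * y)); first ring.
by rewrite eqSs eqS; ring.
Qed.

End GeneratingSeries.
End Gregory.

Theorem lemma6p6 (lam : nat -> {poly rat}) (G : nat -> nat -> {poly rat}) :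
  is_L lam -> is_G lam G ->
  (forall m n : nat,
     bmul (bmul (Sgen G) (bsub (Lmy lam) (Lmx lam))) (bmul bX bY) m n =
     bmul (bsub (bmul bX (Lmy lam)) (bmul bY (Lmx lam)))
          (bsub (bsub (bopp (bmul bY (Lmx lam))) (bmul bX (Lmy lam)))
                (bmul bX bY)) m n)
  /\
  (forall m n : nat, (1 <= m)%N -> (2 <= n)%N ->
     Gtil G m n = Gtil G n.-1 m.+1).
Proof.
move=> lamL hG; split=> [m n | m n m_ge1 n_ge2].
  rewrite !bmulE !bsubE boppE Lmx_in_x Lmy_in_y bX_in_x bY_in_y.
  by rewrite (Sgen_gregory lamL hG).
have := congr1 (fun A : R2 => A n.-1 m) (Sgen_swap lamL hG).
by rewrite /swap /Sgen m_ge1; case: n n_ge2 => [|[|n]].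
Qed.
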